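(* Let $R$ be an exchange ring and $\alpha=[a_1\ a_2\ \cdots\ a_n]$ a right unimodular row over $R$ (i.e. $a_1R+\cdots+a_nR=R$), with $n\ge 2$. Then $\alpha$ can be transformed by a finite sequence of elementary column operations to a row $[b_1\ b_2\ \cdots\ b_n]$ such that $Rb_1R=R$ and $b_i\in a_iRa_i$ for all $i\ge 2$.
   Context: All rings are unital. A ring $R$ is an exchange ring if for every $a\in R$ there is an idempotent $e\in aR$ with $1-e\in(1-a)R$ (equivalently, $R_R$ has the finite exchange property). An elementary column operation on a row $[c_1\ \cdots\ c_n]$ replaces some entry $c_i$ by $c_i+c_jr$ for some $j\neq i$ and $r\in R$. *)

From HB Require Import structures.
From mathcomp Require Import all_boot all_order all_algebra.
Set Implicit Arguments. Unset Strict Implicit. Unset Printing Implicit Defensive.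
Import GRing.Theory.
Local Open Scope ring_scope.

Definition exchange_ring (R : pzRingType) : Prop :=
  forall a : R, exists e : R,
    e * e = e /\ (exists r : R, e = a * r) /\ (exists s : R, 1 - e = (1 - a) * s).

Definition right_unimodular (R : pzRingType) (n : nat) (a : {ffun 'I_n -> R}) : Prop :=
  exists r : {ffun 'I_n -> R}, \sum_(i < n) a i * r i = 1.

Definition elem_col_op (R : pzRingType) (n : nat) (c c' : {ffun 'I_n -> R}) : Prop :=
  exists (i j : 'I_n) (r : R), i != j /\
    c' = [ffun k => if k == i then c i + c j * r else c k].

Inductive elem_col_reach (R : pzRingType) (n : nat) :
    {ffun 'I_n -> R} -> {ffun 'I_n -> R} -> Prop :=
  | ecr_refl c : elem_col_reach c c
  | ecr_step c c' c'' : elem_col_op c c' -> elem_col_reach c' c'' -> elem_col_reach c c''.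

Definition full_twosided (R : pzRingType) (b : R) : Prop :=
  exists (m : nat) (x y : 'I_m -> R), \sum_(k < m) x k * b * y k = 1.

From HB Require Import structures.
From mathcomp Require Import all_boot all_order all_algebra.
Import GRing.Theory.
Local Open Scope ring_scope.
Set Implicit Arguments. Unset Strict Implicit. Unset Printing Implicit Defensive.

(* Write [sum_j c_j x_j = 1] and apply the exchange property to [c_i x_i]: this
   gives an idempotent [e in c_i x_i R] with [1 - e in (1 - c_i x_i)R], a right
   combination of the other entries. Adding [-(1 - e) c_i] to [c_i] by column
   operations leaves [e c_i in c_i R c_i], and the row stays unimodular. Doing
   this for every [i >= 2] and then adding [(1 - e)(1 - c_1)] to [c_1] instead
   yields [b_1] with [e b_1 = e c_1] and [(1 - e) b_1 = 1 - e], whence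
   [e b_1 x_1 r + (1 - e) b_1 = e + (1 - e) = 1]. *)

Section ExchangeUnimodularRows.

Variables (R : pzRingType) (n : nat).
Hypothesis exR : exchange_ring R.
Implicit Types (a c w x : {ffun 'I_n -> R}) (i j : 'I_n).

Definition col_set c i (v : R) : {ffun 'I_n -> R} :=
  [ffun k => if k == i then v else c k].

Lemma col_set_id c i : col_set c i (c i) = c.
Proof. by apply/ffunP=> k; rewrite ffunE; case: eqP => // ->. Qed.

Lemma col_set_set c i u v : col_set (col_set c i u) i v = col_set c i v.
Proof. by apply/ffunP=> k; rewrite !ffunE; case: eqP. Qed.

Lemma sum_col_set c i v x :
  \sum_j col_set c i v j * x j = v * x i + \sum_(j | j != i) c j * x j.
Proof.
rewrite (bigD1 i) //= ffunE eqxx; congr (_ + _).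
by apply: eq_bigr => j /negbTE ji; rewrite ffunE ji.
Qed.

Lemma elem_col_reach_trans a c c' :
  elem_col_reach a c -> elem_col_reach c c' -> elem_col_reach a c'.
Proof. by elim=> // c1 c2 c3 op12 _ IH /IH; apply: ecr_step. Qed.

Lemma elem_col_op_add c i j r :
  i != j -> elem_col_op c (col_set c i (c i + c j * r)).
Proof. by move=> ij; exists i, j, r. Qed.

Lemma elem_col_reach_add_sum c i w :
  elem_col_reach c (col_set c i (c i + \sum_(j | j != i) c j * w j)).
Proof.
suff reach_seq s :
    elem_col_reach c (col_set c i (c i + \sum_(j <- s | j != i) c j * w j)).
  exact: reach_seq.
elim: s => [|j s IH]; first by rewrite big_nil addr0 col_set_id; apply: ecr_refl.
rewrite big_cons; case: eqVneq => [_ //|ji].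
apply: elem_col_reach_trans IH _.
set c' := col_set c i _.
have ij : i != j by rewrite eq_sym.
have /ecr_step := elem_col_op_add c' (w j) ij.
rewrite /c' col_set_set !ffunE eqxx (negbTE ji) (addrC (c j * w j)) addrA.
by apply; apply: ecr_refl.
Qed.

Lemma full_twosided_idempotent_split (e b y : R) :
  e * e = e -> e * b * y = e -> (1 - e) * b = 1 - e -> full_twosided b.
Proof.
move=> ee eby feb; exists 2%N, (fun k => if val k == 0%N then e else 1 - e),
  (fun k => if val k == 0%N then y else 1).
by rewrite big_ord_recr big_ord_recr big_ord0 /= add0r mulr1 eby feb addrC subrK.
Qed.

Lemma exchange_unimodular_split c x i :
  \sum_j c j * x j = 1 -> exists e r s, [/\ e * e = e, e = c i * x i * r
    & 1 - e = \sum_(j | j != i) c j * (x j * s)].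
Proof.
move=> cx1; have [e [ee [[r er] [s es]]]] := exR (c i * x i).
exists e, r, s; split=> //.
rewrite es -cx1 (bigD1 i) //= addrC addrK big_distrl /=.
by apply: eq_bigr => j _; rewrite mulrA.
Qed.

Lemma elem_col_reach_corner c i : right_unimodular c ->
  exists c', [/\ elem_col_reach c c', right_unimodular c',
    exists t, c' i = c i * t * c i & forall j, j != i -> c' j = c j].
Proof.
move=> [x cx1]; have [e [r [s [ee er es]]]] := exchange_unimodular_split i cx1.
pose w := [ffun j => - (x j * s * c i)].
have ec : c i + \sum_(j | j != i) c j * w j = e * c i.
  rewrite (eq_bigr (fun j => - (c j * (x j * s)) * c i)); last first.
    by move=> j _; rewrite ffunE mulrN mulNr !mulrA.
  by rewrite -big_distrl /= sumrN -es mulNr mulrBl mul1r opprB addrC subrK.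
exists (col_set c i (c i + \sum_(j | j != i) c j * w j)); split.
- exact: elem_col_reach_add_sum.
- exists [ffun j => if j == i then x i * r else x j * s].
  rewrite sum_col_set ffunE eqxx ec -!mulrA [c i * _]mulrA -er ee.
  rewrite (eq_bigr (fun j => c j * (x j * s))) => [|j /negbTE ji].
    by rewrite -es addrC subrK.
  by rewrite ffunE ji.
- by exists (x i * r); rewrite ffunE eqxx ec er !mulrA.
- by move=> j /negbTE ji; rewrite ffunE ji.
Qed.

Lemma elem_col_reach_full c i : right_unimodular c ->
  exists b, [/\ elem_col_reach c b, full_twosided (b i)
    & forall j, j != i -> b j = c j].
Proof.
move=> [x cx1]; have [e [r [s [ee er es]]]] := exchange_unimodular_split i cx1.
pose w := [ffun j => x j * s * (1 - c i)].
pose b := col_set c i (c i + \sum_(j | j != i) c j * w j).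
have bi : b i = c i + (1 - e) * (1 - c i).
  rewrite ffunE eqxx es big_distrl /=; congr (_ + _).
  by apply: eq_bigr => j _; rewrite ffunE !mulrA.
have e1e : e * (1 - e) = 0 by rewrite mulrBr mulr1 ee subrr.
exists b; split.
- exact: elem_col_reach_add_sum.
- apply: (full_twosided_idempotent_split (y := x i * r) ee).
  + by rewrite bi mulrDr (mulrA e) e1e mul0r addr0 -!mulrA [c i * _]mulrA -er ee.
  + have f1f : (1 - e) * (1 - e) = 1 - e by rewrite mulrBl mul1r e1e subr0.
    by rewrite bi mulrDr (mulrA (1 - e)) f1f -mulrDr subrKC mulr1.
- by move=> j /negbTE ji; rewrite ffunE ji.
Qed.

Lemma elem_col_reach_corners a (s : seq 'I_n) : right_unimodular a ->
  exists c, [/\ elem_col_reach a c, right_unimodular c,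
    forall j, j \in s -> exists r, c j = a j * r * a j
    & forall j, j \notin s -> c j = a j].
Proof.
move=> ua; elim: s => [|i s [c [ac uc cs cs']]].
  by exists a; split=> //; apply: ecr_refl.
have [c' [cc' uc' [t c'i] c'j]] := elem_col_reach_corner i uc.
exists c'; split=> [||j|j].
- exact: elem_col_reach_trans ac cc'.
- exact: uc'.
- rewrite in_cons; case: eqVneq => [-> _ | ji /= js].
    rewrite c'i; have [/cs[u ->] | /cs' ->] := boolP (i \in s); last by exists t.
    by exists (u * a i * t * a i * u); rewrite !mulrA.
  by rewrite c'j //; apply: cs.
- by rewrite in_cons negb_or => /andP[ji js]; rewrite c'j ?cs'.
Qed.

End ExchangeUnimodularRows.

Theorem corollary2p5 (R : pzRingType) (n : nat) (a : {ffun 'I_n -> R}) :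
  exchange_ring R -> (2 <= n)%N -> right_unimodular a ->
  exists b : {ffun 'I_n -> R},
    elem_col_reach a b /\
    (forall i : 'I_n, val i = 0%N -> full_twosided (b i)) /\
    (forall i : 'I_n, (1 <= val i)%N -> exists r : R, b i = a i * r * a i).
Proof.
move=> exR n_ge2 ua; pose i0 : 'I_n := Ordinal (ltnW n_ge2).
have [c [ac uc ca _]] :=
  elem_col_reach_corners exR [seq j <- enum 'I_n | j != i0] ua.
have [b [cb bfull bc]] := elem_col_reach_full exR i0 uc.
exists b; split; first exact: elem_col_reach_trans ac cb.
split=> [i /eqP i0E | i i_ge1].
  by have -> : i = i0 by apply/val_inj/eqP.
have ii0 : i != i0 by rewrite -val_eqE /= -lt0n.
by rewrite bc //; apply: ca; rewrite mem_filter mem_enum ii0.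
Qed.
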